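(* Let $\mathbb{M}$ be a weight sequence with sequence of quotients $\mathbf{m}$. The following are equivalent: (i) $0<\liminf_{t\to\infty}\frac{\nu_{\mathbf{m}}(t)}{\omega_{\mathbb{M}}(t)}\le\limsup_{t\to\infty}\frac{\nu_{\mathbf{m}}(t)}{\omega_{\mathbb{M}}(t)}<\infty$; (ii) $\beta(\nu_{\mathbf{m}})>0$ and $\alpha(\nu_{\mathbf{m}})<\infty$; (iii) $\beta(\omega_{\mathbb{M}})>0$ and $\alpha(\omega_{\mathbb{M}})<\infty$. In this case, $\beta(\omega_{\mathbb{M}})=\beta(\nu_{\mathbf{m}})$ and $\alpha(\omega_{\mathbb{M}})=\alpha(\nu_{\mathbf{m}})$.
   Context: A weight sequence is $\mathbb{M}=(M_p)_{p\in\mathbb{N}_0}$ of positive reals with $M_0=1$, $M_p^2\le M_{p-1}M_{p+1}$ ($p\ge1$) and $M_p^{1/p}\to\infty$; $m_p=M_{p+1}/M_p$. $\omega_{\mathbb{M}}(t):=\sup_{p\in\mathbb{N}_0}\log(t^p/M_p)$ for $t>0$, $\omega_{\mathbb{M}}(0)=0$; $\nu_{\mathbf{m}}(t):=\#\{j\in\mathbb{N}_0:m_j\le t\}$ for $t>0$. For a positive measurable $f$ on $[A,\infty)$: $\alpha(f):=\inf\{\alpha:\exists C_\alpha>0\ \forall\Lambda>1,\ \limsup_{x\to\infty}\sup_{\lambda\in[1,\Lambda]}\frac{f(\lambda x)}{\lambda^{\alpha}f(x)}\le C_\alpha\}$ and $\beta(f):=\sup\{\beta:\exists D_\beta>0\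 \forall\Lambda>1,\ \liminf_{x\to\infty}\inf_{\lambda\in[1,\Lambda]}\frac{f(\lambda x)}{\lambda^{\beta}f(x)}\ge D_\beta\}$; for $\omega_{\mathbb{M}}$, $\nu_{\mathbf{m}}$ they are computed on any $[A,\infty)$, $A>0$, where the function is positive. *)

From HB Require Import structures.
From mathcomp Require Import all_boot all_order all_algebra.
From mathcomp Require Import all_classical all_reals all_analysis.
Set Implicit Arguments. Unset Strict Implicit. Unset Printing Implicit Defensive.
Import Order.TTheory GRing.Theory Num.Theory.
Import numFieldNormedType.Exports.
Local Open Scope classical_set_scope.
Local Open Scope ring_scope.
From mathcomp Require Import finmap.

Section Defs.
Variable R : realType.

Definition weight_sequence (M : nat -> R) : Prop :=
  [/\ M 0%N = 1,
      (forall p, 0 < M p),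
      (forall p, (1 <= p)%N -> M p ^+ 2 <= M p.-1 * M p.+1) &
      ((fun p : nat => M p `^ (p%:R^-1)) @ \oo --> +oo)].

Definition quot (M : nat -> R) (p : nat) : R := M p.+1 / M p.

Definition omegaM (M : nat -> R) (t : R) : R :=
  if 0 < t then sup [set ln (t ^+ p / M p) | p in [set: nat]] else 0.

Definition nu (m : nat -> R) (t : R) : R :=
  (#|` fset_set [set j : nat | m j <= t] |)%fset%:R.

Local Open Scope ereal_scope.

Definition limsup_pinfty (g : R -> \bar R) : \bar R :=
  limf_esup g (pinfty_nbhs R).
Definition liminf_pinfty (g : R -> \bar R) : \bar R :=
  limf_einf g (pinfty_nbhs R).

(* index alpha(f) (an extended real: inf of the empty set is +oo) *)
Definition alpha_idx (f : R -> R) : \bar R :=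
  ereal_inf [set a%:E | a in [set a : R | exists C : R, (0 < C)%R /\
    forall L : R, (1 < L)%R ->
      limsup_pinfty (fun x => ereal_sup
        [set (f (l * x) / (l `^ a * f x))%:E | l in `[1%R, L]]) <= C%:E]].

(* index beta(f) (an extended real: sup of the empty set is -oo) *)
Definition beta_idx (f : R -> R) : \bar R :=
  ereal_sup [set b%:E | b in [set b : R | exists D : R, (0 < D)%R /\
    forall L : R, (1 < L)%R ->
      D%:E <= liminf_pinfty (fun x => ereal_inf
        [set (f (l * x) / (l `^ b * f x))%:E | l in `[1%R, L]])]].

End Defs.

From HB Require Import structures.
From mathcomp Require Import all_boot all_order all_algebra.
From mathcomp Require Import all_classical all_reals all_analysis.
From mathcomp Require Import ring lra.
Import Order.TTheory GRing.Theory Num.Theory.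

(* Write w := omegaM M and n := nu (quot M).  As the quotients m_p increase, the
   supremum defining w(t) is attained at p = n(t), whence for l >= 1
     n(t) ln l <= w(lt) - w(t)   and   w(t) - w(t/l) <= n(t) ln l,
   and nothing else about the pair (w, n) is used.  Each of (i), (ii), (iii) is
   equivalent to n and w having the same order at infinity.  If n <= C w, then
   w(lam t) <= 2 w(t) for ln lam = 1/2C; if w <= C n, then
   w(2t) >= (1 + ln 2 / C) w(t); iterated, these give power bounds for w, which
   transfer to n.  Conversely, an upper power bound for w or n gives n <= C w
   through n(s) ln 2 <= w(2s), and a lower power bound with positive exponent
   halves w or n under t |-> t/lam for a large lam, so that
   w(t) <= w(t/lam) + n(t) ln lam yields w <= C n.  Power bounds only depend on
   the order of magnitude, so the indices of w and n coincide. *)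

Set Implicit Arguments.
Unset Strict Implicit.
Unset Printing Implicit Defensive.
Local Open Scope classical_set_scope.
Local Open Scope ring_scope.

Section limf_esup_einf_near.
Context {T : choiceType} {X : filteredType T} {R : realType}.
Context (F : set_system X) {FF : Filter F}.
Implicit Types (g : X -> \bar R) (C : \bar R).
Local Open Scope ereal_scope.

Lemma limf_esup_le g C : (\forall x \near F, g x <= C) -> limf_esup g F <= C.
Proof.
move=> gC; rewrite limf_esupE.
apply: (@le_trans _ _ (ereal_sup (g @` [set x | g x <= C]))).
  by apply: ereal_inf_lbound; exists [set x | g x <= C].
by apply: ge_ereal_sup => _ [x gxC <-].
Qed.

Lemma limf_esup_lt g C : limf_esup g F < C -> \forall x \near F, g x < C.
Proof.
rewrite limf_esupE => /ereal_inf_lt[_ [V FV <-] supVC].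
by apply: filterS FV => x Vx; apply: le_lt_trans supVC; apply: ereal_sup_ubound; exists x.
Qed.

Lemma limf_einf_ge g C : (\forall x \near F, C <= g x) -> C <= limf_einf g F.
Proof.
move=> Cg; rewrite limf_einfE.
apply: (@le_trans _ _ (ereal_inf (g @` [set x | C <= g x]))).
  by apply: le_ereal_inf_tmp => _ [x Cgx <-].
by apply: ereal_sup_ubound; exists [set x | C <= g x].
Qed.

Lemma limf_einf_gt g C : C < limf_einf g F -> \forall x \near F, C < g x.
Proof.
rewrite limf_einfE => /ereal_sup_gt[_ [V FV <-] CinfV].
by apply: filterS FV => x Vx; apply: lt_le_trans CinfV _; apply: ereal_inf_lbound; exists x.
Qed.

Lemma limf_einf_le_esup {PF : ProperFilter F} g : limf_einf g F <= limf_esup g F.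
Proof.
rewrite limf_einfE limf_esupE; apply: ge_ereal_sup => _ [V FV <-].
apply: le_ereal_inf_tmp => _ [W FW <-].
have [x [Vx Wx]] := filter_ex (filterI FV FW).
by apply: (@le_trans _ _ (g x)); [apply: ereal_inf_lbound | apply: ereal_sup_ubound]; exists x.
Qed.

End limf_esup_einf_near.

Section power_bounds.
Context {R : realType}.
Implicit Types (f g : R -> R) (a b : R).

Definition upper_power_bound f a := exists2 C, 0 < C & forall L, 1 < L ->
  \forall x \near +oo, forall l, 1 <= l <= L -> f (l * x) <= C * l `^ a * f x.

Definition lower_power_bound f b := exists2 D, 0 < D & forall L, 1 < L ->
  \forall x \near +oo, forall l, 1 <= l <= L -> D * l `^ b * f x <= f (l * x).

Let ratio_le f a x l K : 0 < f x -> 0 < l ->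
  (f (l * x) / (l `^ a * f x) <= K) = (f (l * x) <= K * l `^ a * f x).
Proof. by move=> fx0 l0; rewrite ler_pdivrMr ?mulr_gt0 ?powR_gt0 // mulrA. Qed.

Let ratio_ge f a x l K : 0 < f x -> 0 < l ->
  (K <= f (l * x) / (l `^ a * f x)) = (K * l `^ a * f x <= f (l * x)).
Proof. by move=> fx0 l0; rewrite ler_pdivlMr ?mulr_gt0 ?powR_gt0 // mulrA. Qed.

Let itv1_gt0 (l L : R) : 1 <= l <= L -> 0 < l.
Proof. by case/andP => /(lt_le_trans ltr01). Qed.

Lemma alpha_idxE f : (\forall x \near +oo, 0 < f x) ->
  alpha_idx f = ereal_inf [set a%:E | a in upper_power_bound f].
Proof.
move=> fpos; congr (ereal_inf _); congr (image _ _); apply/seteqP; split => a /=.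
- case=> C [C0 limsupC]; exists (C *+ 2); first by rewrite mulrn_wgt0.
  move=> L L1; have C2 : (C%:E < (C *+ 2)%:E)%E by rewrite lte_fin mulr2n ltrDr.
  have /limf_esup_lt supC := le_lt_trans (limsupC L L1) C2.
  apply: (filterS2 _ _ supC fpos) => x supx fx0 l lL; have l0 := itv1_gt0 lL.
  rewrite -ratio_le // -lee_fin; apply/ltW/(le_lt_trans _ supx).
  by apply: ereal_sup_ubound; exists l.
- case=> C C0 fC; exists C; split => // L L1; apply: limf_esup_le.
  apply: (filterS2 _ _ (fC L L1) fpos) => x fCx fx0.
  apply: ge_ereal_sup => _ [l /= lL <-]; rewrite in_itv /= in lL.
  by rewrite lee_fin ratio_le ?fCx ?(itv1_gt0 lL).
Qed.

Lemma beta_idxE f : (\forall x \near +oo, 0 < f x) ->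
  beta_idx f = ereal_sup [set b%:E | b in lower_power_bound f].
Proof.
move=> fpos; congr (ereal_sup _); congr (image _ _); apply/seteqP; split => b /=.
- case=> D [D0 liminfD]; exists (D / 2); first by rewrite divr_gt0.
  move=> L L1; have D2 : ((D / 2)%:E < D%:E)%E by rewrite lte_fin ltr_pdivrMr // ltr_pMr // ltr1n.
  have /limf_einf_gt infD := lt_le_trans D2 (liminfD L L1).
  apply: (filterS2 _ _ infD fpos) => x infx fx0 l lL; have l0 := itv1_gt0 lL.
  rewrite -ratio_ge // -lee_fin; apply/ltW/(lt_le_trans infx).
  by apply: ereal_inf_lbound; exists l.
- case=> D D0 fD; exists D; split => // L L1; apply: limf_einf_ge.
  apply: (filterS2 _ _ (fD L L1) fpos) => x fDx fx0.
  apply: le_ereal_inf_tmp => _ [l /= lL <-]; rewrite in_itv /= in lL.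
  by rewrite lee_fin ratio_ge ?fDx ?(itv1_gt0 lL).
Qed.

Lemma alpha_idx_lty f : (\forall x \near +oo, 0 < f x) ->
  (alpha_idx f < +oo)%E <-> exists a, upper_power_bound f a.
Proof.
move=> fpos; rewrite alpha_idxE //; split => [|[a fa]].
- apply: contraPP => /forallNP nofa.
  suff -> : [set a%:E | a in upper_power_bound f] = set0 by rewrite ereal_inf0.
  by apply/seteqP; split => // x [a /nofa].
- by apply: le_lt_trans (ltry a); apply: ereal_inf_lbound; exists a.
Qed.

Lemma beta_idx_gt0 f : (\forall x \near +oo, 0 < f x) ->
  (0 < beta_idx f)%E <-> exists2 b, 0 < b & lower_power_bound f b.
Proof.
move=> fpos; rewrite beta_idxE //; split => [|[b b0 fb]].
- by case/ereal_sup_gt => _ [b fb <-]; rewrite lte_fin => b0; exists b.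
- by apply: lt_le_trans (_ : 0 < b%:E)%E _; [rewrite lte_fin | apply: ereal_sup_ubound; exists b].
Qed.

End power_bounds.

Section same_order.
Context {R : realType}.
Implicit Types (f g : R -> R) (a b : R).

Definition dominated f g := exists2 C, 0 < C & \forall x \near +oo, f x <= C * g x.

Definition same_order f g := dominated f g /\ dominated g f.

Lemma near_pinfty_ge (P : R -> Prop) :
  (\forall x \near +oo, P x) -> \forall x \near +oo, forall y, x <= y -> P y.
Proof. by case=> M [Mreal MP]; exists M; split => // x Mx y /(lt_le_trans Mx)/MP. Qed.

Lemma near_pinfty_dilate (P : R -> Prop) :
  (\forall x \near +oo, P x) -> \forall x \near +oo, forall l, 1 <= l -> P (l * x).
Proof.
move=> FP; apply: (filterS2 _ _ (near_pinfty_ge FP) (nbhs_pinfty_gt (@real0 R))).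
by move=> x Px x0 l l1; apply: Px; rewrite ler_peMl // ltW.
Qed.

Lemma near_pinfty_divr (P : R -> Prop) (lam : R) : 0 < lam ->
  (\forall x \near +oo, P x) -> \forall x \near +oo, P (x / lam).
Proof.
move=> lam0 [M [Mreal MP]]; exists (M * lam); split; first by rewrite realM // gtr0_real.
by move=> x; rewrite -ltr_pdivlMr //; exact: MP.
Qed.

Lemma upper_power_bound_same_order f g a :
  same_order f g -> upper_power_bound g a -> upper_power_bound f a.
Proof.
case=> [[C1 C10 fg] [C2 C20 gf]] [C C0 gC].
exists (C1 * C * C2) => [|L L1]; first by rewrite !mulr_gt0.
apply: (filterS3 _ _ (gC L L1) (near_pinfty_dilate fg) gf) => x gCx fgx gfx l lL.
have l1 := (andP lL).1; have la0 : 0 < l `^ a by rewrite powR_gt0 // (lt_le_trans ltr01).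
apply: le_trans (fgx l l1) _; rewrite -!mulrA ler_pM2l //.
apply: le_trans (gCx l lL) _; rewrite -mulrA ler_pM2l // mulrCA ler_pM2l //.
Qed.

Lemma lower_power_bound_same_order f g b :
  same_order f g -> lower_power_bound g b -> lower_power_bound f b.
Proof.
case=> [[C1 C10 fg] [C2 C20 gf]] [D D0 gD].
exists (D / (C1 * C2)) => [|L L1]; first by rewrite divr_gt0 ?mulr_gt0.
apply: (filterS3 _ _ (gD L L1) fg (near_pinfty_dilate gf)) => x gDx fgx gfx l lL.
have l1 := (andP lL).1; have lb0 : 0 < l `^ b by rewrite powR_gt0 // (lt_le_trans ltr01).
rewrite -(ler_pM2l C20); apply: le_trans (gfx l l1); apply: le_trans (gDx l lL).
have -> : C2 * (D / (C1 * C2) * l `^ b * f x) = D * l `^ b * (f x / C1).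
  by field; rewrite !gt_eqF.
by rewrite ler_pM2l ?mulr_gt0 // ler_pdivrMr // mulrC.
Qed.

Lemma alpha_idx_same_order f g :
  (\forall x \near +oo, 0 < f x) -> (\forall x \near +oo, 0 < g x) ->
  same_order f g -> alpha_idx f = alpha_idx g.
Proof.
move=> fpos gpos [fg gf]; rewrite !alpha_idxE //; congr (ereal_inf (image _ _)).
by apply/seteqP; split => a; apply: upper_power_bound_same_order.
Qed.

Lemma beta_idx_same_order f g :
  (\forall x \near +oo, 0 < f x) -> (\forall x \near +oo, 0 < g x) ->
  same_order f g -> beta_idx f = beta_idx g.
Proof.
move=> fpos gpos [fg gf]; rewrite !beta_idxE //; congr (ereal_sup (image _ _)).
by apply/seteqP; split => b; apply: lower_power_bound_same_order.
Qed.

Lemma same_order_ratio f g : (\forall x \near +oo, 0 < g x) ->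
  same_order f g <-> (0 < liminf_pinfty (fun x => (f x / g x)%:E))%E /\
                     (limsup_pinfty (fun x => (f x / g x)%:E) < +oo)%E.
Proof.
move=> gpos; split => [[[C C0 fg] [c c0 gf]]|[inf_gt0 sup_lty]].
  split.
  - apply: (@lt_le_trans _ _ c^-1%:E); first by rewrite lte_fin invr_gt0.
    apply: limf_einf_ge; apply: (filterS2 _ _ gf gpos) => x gfx gx0.
    by rewrite lee_fin ler_pdivlMr // ler_pdivrMl.
  - apply: le_lt_trans (ltry C); apply: limf_esup_le.
    apply: (filterS2 _ _ fg gpos) => x fgx gx0.
    by rewrite lee_fin ler_pdivrMr.
have [c c0 c_inf] : exists2 c, 0 < c & (c%:E < liminf_pinfty (fun x => (f x / g x)%:E))%E.
  move: inf_gt0; case: liminf_pinfty => [r||] // r0; last by exists 1 => //; exact: ltry.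
  rewrite lte_fin in r0; exists (r / 2); first by rewrite divr_gt0.
  by rewrite lte_fin ltr_pdivrMr // ltr_pMr // ltr1n.
have [C sup_C] : exists C, (limsup_pinfty (fun x => (f x / g x)%:E) < C%:E)%E.
  move: sup_lty; case: limsup_pinfty => [r||] // _; last by exists 0; exact: ltNyr.
  by exists (r + 1); rewrite lte_fin ltrDl.
split.
- exists (Num.max C 1); first by rewrite lt_max ltr01 orbT.
  apply: (filterS2 _ _ (limf_esup_lt sup_C) gpos) => x fgx gx0.
  rewrite lte_fin ltr_pdivrMr // in fgx; apply: (le_trans (ltW fgx)).
  by apply: ler_wpM2r; [exact: ltW | rewrite le_max lexx].
- exists c^-1; first by rewrite invr_gt0.
  apply: (filterS2 _ _ (limf_einf_gt c_inf) gpos) => x cfg gx0.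
  by rewrite lte_fin ltr_pdivlMr // in cfg; rewrite ler_pdivlMl // ltW.
Qed.

End same_order.

Section dilation.
Context {R : realType}.

Lemma dilation_ind (lam : R) (P : R -> Prop) : 1 < lam ->
    (forall l, 1 <= l <= lam -> P l) ->
    (forall l, 1 <= l -> P l -> P (lam * l)) ->
  forall l, 1 <= l -> P l.
Proof.
move=> lam1 Pbase Pstep l l1; have lam0 : 0 < lam := lt_trans ltr01 lam1.
have [k lk] : exists k : nat, l <= lam ^+ k.
  have bernoulli k : 1 + k%:R * (lam - 1) <= lam ^+ k.
    elim: k => [|k IH]; first by rewrite mul0r addr0.
    have : 0 <= (lam - 1) * (lam ^+ k - 1) by rewrite mulr_ge0 ?subr_ge0 ?exprn_ege1 ?ltW.
    by rewrite exprS -natr1; nra.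
  have lam1_gt0 : 0 < lam - 1 by rewrite subr_gt0.
  exists (Num.bound (`|l| / (lam - 1))); apply: le_trans (bernoulli _).
  have := archi_boundP (divr_ge0 (normr_ge0 l) (ltW lam1_gt0)).
  by rewrite ltr_pdivrMr // => /ltW; have := ler_norm l; lra.
elim: k l l1 lk => [|k IH] l l1 lk.
  by apply: Pbase; rewrite l1 (le_trans lk) // expr0 ltW.
have [llam|lamlt] := leP l lam; first by apply: Pbase; rewrite l1.
have l'1 : 1 <= l / lam by rewrite ler_pdivlMr // mul1r ltW.
have -> : l = lam * (l / lam) by rewrite mulrC divfK ?gt_eqF.
by apply: Pstep l'1 (IH _ l'1 _); rewrite ler_pdivrMr // -exprSr.
Qed.

Lemma exists_gt1_powR_ge (K D b : R) : 0 <= K -> 0 < D -> 0 < b ->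
  exists2 lam, 1 < lam & K <= D * lam `^ b.
Proof.
move=> K0 D0 b0; set c := (K / D) `^ b^-1.
exists (Num.max 2 c); first by rewrite lt_max ltr1n.
rewrite -ler_pdivrMl // mulrC.
have -> : K / D = c `^ b by rewrite -powRrM mulVf ?gt_eqF // powRr1 // divr_ge0 // ltW.
by apply: ge0_ler_powR; rewrite ?nnegrE ?powR_ge0 ?le_max ?lexx ?orbT // ltW.
Qed.

Let powR_ln_ratio (lam Q : R) : 1 < lam -> 0 < Q -> lam `^ (ln Q / ln lam) = Q.
Proof.
move=> lam1 Q0; rewrite /powR gt_eqF ?(lt_trans ltr01) // divfK ?lnK //.
by rewrite gt_eqF // ln_gt0.
Qed.

Variables (w : R -> R) (lam Q x : R).
Hypotheses (lam1 : 1 < lam) (Q1 : 1 <= Q) (x0 : 0 < x).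
Hypothesis w_homo : forall s t, x <= s -> s <= t -> w s <= w t.
Hypothesis w_ge0 : forall y, x <= y -> 0 <= w y.

Let lam0 : 0 < lam. Proof. exact: lt_trans lam1. Qed.
Let Q0 : 0 < Q. Proof. exact: lt_le_trans Q1. Qed.
Let ln_ratio_ge0 : 0 <= ln Q / ln lam.
Proof. by rewrite divr_ge0 ?ln_ge0 // ltW // ln_gt0. Qed.
Let x_le_dilate l : 1 <= l -> x <= l * x.
Proof. by move=> l1; rewrite ler_peMl // ltW. Qed.

Lemma dilation_upper_power_bound :
    (forall y, x <= y -> w (lam * y) <= Q * w y) ->
  forall l, 1 <= l -> w (l * x) <= Q * l `^ (ln Q / ln lam) * w x.
Proof.
move=> w_lam; apply: (dilation_ind lam1) => [l /andP[l1 llam]|l l1 IH].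
- apply: le_trans (w_homo (x_le_dilate l1) (ler_wpM2r (ltW x0) llam)) _.
  apply: le_trans (w_lam x (lexx x)) _.
  rewrite -mulrA ler_pM2l // ler_peMl ?w_ge0 //.
  by rewrite -(powRr0 l) ler_powR.
- rewrite -[lam * l * x]mulrA powRM ?(ltW lam0) ?(le_trans ler01 l1) // powR_ln_ratio //.
  apply: le_trans (w_lam _ (x_le_dilate l1)) _.
  by rewrite -mulrA ler_pM2l.
Qed.

Lemma dilation_lower_power_bound :
    (forall y, x <= y -> Q * w y <= w (lam * y)) ->
  forall l, 1 <= l -> Q^-1 * l `^ (ln Q / ln lam) * w x <= w (l * x).
Proof.
move=> w_lam; apply: (dilation_ind lam1) => [l /andP[l1 llam]|l l1 IH].
- apply: le_trans (w_homo (lexx x) (x_le_dilate l1)).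
  rewrite ler_piMl ?w_ge0 // ler_pdivrMl // mulr1.
  rewrite -{2}(powR_ln_ratio lam1 Q0) ge0_ler_powR // nnegrE ?(le_trans ler01) //.
  exact: ltW.
- rewrite -[lam * l * x]mulrA powRM ?(ltW lam0) ?(le_trans ler01 l1) // powR_ln_ratio //.
  rewrite mulKf ?gt_eqF //.
  apply: le_trans (w_lam _ (x_le_dilate l1)).
  by rewrite -ler_pdivrMl // mulrA.
Qed.

End dilation.

Section log_primitive.
Context {R : realType}.

(* The inequalities satisfied by w(t) = int_0^t n(s) ds / s for a nondecreasing
   n >= 0; omegaM M and nu (quot M) form such a pair. *)
Record log_primitive (w n : R -> R) : Prop := {
  log_primitive_ge0 : forall t, 0 < t -> 0 <= w t;
  density_ge0 : forall t, 0 <= n t;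
  log_primitive_dilate : forall t l, 0 < t -> 1 <= l -> n t * ln l <= w (l * t) - w t;
  log_primitive_contract : forall t l, 0 < t -> 1 <= l -> w t - w (t / l) <= n t * ln l;
  log_primitive_near_pinfty : \forall t \near +oo, 0 < w t /\ 1 <= n t }.

Variables (w n : R -> R) (wn : log_primitive w n).

Lemma log_primitive_homo s t : 0 < s -> s <= t -> w s <= w t.
Proof.
move=> s0 st; have l1 : 1 <= t / s by rewrite ler_pdivlMr // mul1r.
have := log_primitive_dilate wn s0 l1; rewrite mulrC divfK ?gt_eqF //.
have : 0 <= n s * ln (t / s) by rewrite mulr_ge0 ?(density_ge0 wn) ?ln_ge0.
lra.
Qed.

Lemma density_ln_le t l : 0 < t -> 1 <= l -> n t * ln l <= w (l * t).
Proof.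
move=> t0 l1; have := log_primitive_dilate wn t0 l1.
have := log_primitive_ge0 wn t0; lra.
Qed.

Lemma log_primitive_near_gt0 : \forall t \near +oo, 0 < w t.
Proof. by apply: filterS (log_primitive_near_pinfty wn) => t []. Qed.

Lemma density_near_gt0 : \forall t \near +oo, 0 < n t.
Proof. by apply: filterS (log_primitive_near_pinfty wn) => t [_]; apply: lt_le_trans. Qed.

Let homo_from x : 0 < x -> forall s t, x <= s -> s <= t -> w s <= w t.
Proof. by move=> x0 s t xs; apply: log_primitive_homo; apply: lt_le_trans xs. Qed.

Let ge0_from x : 0 < x -> forall y, x <= y -> 0 <= w y.
Proof. by move=> x0 y xy; apply: (log_primitive_ge0 wn); apply: lt_le_trans xy. Qed.

Lemma dominated_upper_power_bound : dominated n w -> exists a, upper_power_bound w a.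
Proof.
(* With ln lam = 1 / 2C: w (lam y) - w y <= n (lam y) ln lam <= w (lam y) / 2. *)
case=> C C0 nw; set lam := expR (C *+ 2)^-1.
have lam1 : 1 < lam by rewrite expR_gt1 invr_gt0 mulrn_wgt0.
have ln_lam : ln lam = (C *+ 2)^-1 by rewrite expRK.
have w_lam : \forall x \near +oo, forall y, x <= y -> w (lam * y) <= 2 * w y.
  apply: (filterS2 _ _ (near_pinfty_ge (near_pinfty_dilate nw)) (nbhs_pinfty_gt (@real0 R))).
  move=> x nwx x0 y xy; have y0 := lt_le_trans x0 xy.
  have := log_primitive_contract wn (mulr_gt0 (lt_trans ltr01 lam1) y0) (ltW lam1).
  rewrite [lam * y / lam]mulrC mulKf ?gt_eqF ?(lt_trans ltr01 lam1) // ln_lam.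
  have : n (lam * y) * (C *+ 2)^-1 <= w (lam * y) / 2.
    have -> : w (lam * y) / 2 = C * w (lam * y) * (C *+ 2)^-1.
      by rewrite -mulr_natr; field; rewrite gt_eqF.
    apply: ler_wpM2r; first by rewrite invr_ge0 mulrn_wge0 // ltW.
    exact: nwx _ xy _ (ltW lam1).
  lra.
exists (ln 2 / ln lam), 2 => // L _.
apply: (filterS2 _ _ w_lam (nbhs_pinfty_gt (@real0 R))) => x wx x0 l /andP[l1 _].
exact: (dilation_upper_power_bound lam1 (ler1n _ 2) x0 (homo_from x0) (ge0_from x0) wx).
Qed.

Lemma dominated_lower_power_bound :
  dominated w n -> exists2 b, 0 < b & lower_power_bound w b.
Proof.
case=> c c0 wn_c; set Q := 1 + ln 2 / c.
have ln2 : 0 < ln (2 : R) by rewrite ln_gt0 // ltr1n.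
have Q1 : 1 < Q by rewrite ltrDl divr_gt0.
have w_2 : \forall x \near +oo, forall y, x <= y -> Q * w y <= w (2 * y).
  apply: (filterS2 _ _ (near_pinfty_ge wn_c) (nbhs_pinfty_gt (@real0 R))).
  move=> x wnx x0 y xy; have y0 := lt_le_trans x0 xy.
  have := log_primitive_dilate wn y0 (ler1n _ 2).
  have : w y / c * ln 2 <= n y * ln 2.
    by rewrite ler_pM2r // ler_pdivrMr // mulrC wnx.
  have -> : Q * w y = w y + w y / c * ln 2 by rewrite /Q; field; rewrite gt_eqF.
  lra.
exists (ln Q / ln 2); first by rewrite divr_gt0 // ln_gt0.
exists Q^-1 => [|L _]; first by rewrite invr_gt0 (lt_trans ltr01).
apply: (filterS2 _ _ w_2 (nbhs_pinfty_gt (@real0 R))) => x wx x0 l /andP[l1 _].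
exact: (dilation_lower_power_bound (ltr1n _ 2) (ltW Q1) x0 (homo_from x0) (ge0_from x0) wx).
Qed.

Lemma upper_power_bound_dominated a : upper_power_bound w a -> dominated n w.
Proof.
case=> C C0 wC; have ln2 : 0 < ln (2 : R) by rewrite ln_gt0 // ltr1n.
exists (C * 2 `^ a / ln 2); first by rewrite divr_gt0 // mulr_gt0 // powR_gt0.
apply: (filterS2 _ _ (wC 2 (ltr1n _ 2)) (nbhs_pinfty_gt (@real0 R))) => t wCt t0.
rewrite mulrAC ler_pdivlMr //; apply: le_trans (density_ln_le t0 (ler1n _ 2)) _.
by apply: wCt; rewrite ler1n lexx.
Qed.

Lemma density_upper_power_bound_dominated a : upper_power_bound n a -> dominated n w.
Proof.
case=> C C0 nC; have ln2 : 0 < ln (2 : R) by rewrite ln_gt0 // ltr1n.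
exists (C * 2 `^ a / ln 2); first by rewrite divr_gt0 // mulr_gt0 // powR_gt0.
apply: (filterS2 _ _ (near_pinfty_divr (ltr0Sn _ 1) (nC 2 (ltr1n _ 2)))
  (nbhs_pinfty_gt (@real0 R))) => t nCt t0.
have t20 : 0 < t / 2 by rewrite divr_gt0.
have t2 : 2 * (t / 2) = t by rewrite mulrC divfK // pnatr_eq0.
have := nCt 2; rewrite ler1n lexx t2 => /(_ isT) n_t.
have := density_ln_le t20 (ler1n _ 2); rewrite t2 => n_t2.
rewrite mulrAC ler_pdivlMr //; apply: le_trans (ler_wpM2r (ltW ln2) n_t) _.
by rewrite -!mulrA !ler_pM2l ?powR_gt0.
Qed.

Lemma lower_power_bound_dominated b : 0 < b -> lower_power_bound w b -> dominated w n.
Proof.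
move=> b0 [D D0 wD]; have [lam lam1 Dlam] := exists_gt1_powR_ge (ler0n _ 2) D0 b0.
have lam0 : 0 < lam := lt_trans ltr01 lam1.
exists (ln lam *+ 2); first by rewrite mulrn_wgt0 // ln_gt0.
apply: (filterS2 _ _ (near_pinfty_divr lam0 (wD lam lam1)) (nbhs_pinfty_gt (@real0 R))).
move=> t wDt t0; have tl0 : 0 < t / lam by rewrite divr_gt0.
have w_t : D * lam `^ b * w (t / lam) <= w t.
  by have := wDt lam; rewrite lexx ltW // [lam * _]mulrC divfK ?gt_eqF //; apply.
have := log_primitive_contract wn t0 (ltW lam1).
have : 2 * w (t / lam) <= D * lam `^ b * w (t / lam).
  by rewrite ler_wpM2r ?(log_primitive_ge0 wn).
rewrite -mulr_natr -mulrA mulr_natl; lra.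
Qed.

Lemma log_primitive_le_density (lam y : R) : 1 < lam -> 0 < y ->
    (forall s, y <= s -> 2 * n s <= n (lam * s)) ->
  forall t, y <= t -> w t <= w (lam * y) + ln lam *+ 2 * n t.
Proof.
move=> lam1 y0 n_lam; have lam0 : 0 < lam := lt_trans ltr01 lam1.
have ln_lam : 0 <= ln lam by rewrite ln_ge0 // ltW.
have y_le l : 1 <= l -> y <= l * y by move=> l1; rewrite ler_peMl // ltW.
suff w_le l : 1 <= l -> w (l * y) <= w (lam * y) + ln lam *+ 2 * n (l * y).
  by move=> t yt; rewrite -(divfK (lt0r_neq0 y0) t) w_le // ler_pdivlMr // mul1r.
move: l; apply: (dilation_ind lam1) => [l /andP[l1 llam]|l l1 IH].
- have : w (l * y) <= w (lam * y).
    apply: log_primitive_homo; last by rewrite ler_pM2r.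
    by rewrite mulr_gt0 // (lt_le_trans ltr01 l1).
  have : 0 <= ln lam *+ 2 * n (l * y) by rewrite mulr_ge0 ?mulrn_wge0 ?(density_ge0 wn).
  lra.
- have ly0 : 0 < l * y by rewrite mulr_gt0 // (lt_le_trans ltr01).
  have := log_primitive_contract wn (mulr_gt0 lam0 ly0) (ltW lam1).
  rewrite [lam * (l * y) / lam]mulrC mulKf ?gt_eqF // -mulrA.
  have := ler_wpM2l ln_lam (n_lam _ (y_le l l1)).
  rewrite -mulr_natr -mulrA mulr_natl in IH *; lra.
Qed.

Lemma density_lower_power_bound_dominated b :
  0 < b -> lower_power_bound n b -> dominated w n.
Proof.
move=> b0 [D D0 nD]; have [lam lam1 Dlam] := exists_gt1_powR_ge (ler0n _ 2) D0 b0.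
have [y y0 n_lam] : exists2 y, 0 < y & forall s, y <= s -> 2 * n s <= n (lam * s).
  apply: pinfty_ex_gt0; apply: filterS (near_pinfty_ge (nD lam lam1)) => y ny s ys.
  apply: le_trans (ny s ys lam _); last by rewrite lexx ltW.
  by rewrite ler_wpM2r ?(density_ge0 wn).
have A0 : 0 <= w (lam * y) by rewrite (log_primitive_ge0 wn) // mulr_gt0 // (lt_trans ltr01).
have B0 : 0 < ln lam *+ 2 by rewrite mulrn_wgt0 // ln_gt0.
exists (w (lam * y) + ln lam *+ 2); first by rewrite ltr_wpDl.
apply: (filterS2 _ _ (nbhs_pinfty_ge (gtr0_real y0)) (log_primitive_near_pinfty wn)).
move=> t yt [_ n1]; have := log_primitive_le_density lam1 y0 n_lam yt.
have : w (lam * y) * 1 <= w (lam * y) * n t by rewrite ler_wpM2l.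
rewrite mulrDl; lra.
Qed.

Lemma same_order_power_bounds : same_order n w <->
  (exists2 b, 0 < b & lower_power_bound w b) /\ (exists a, upper_power_bound w a).
Proof.
split=> [[nw wn'] | [[b b0 wb] [a wa]]].
  split; [exact: (dominated_lower_power_bound wn') | exact: (dominated_upper_power_bound nw)].
split; [exact: (upper_power_bound_dominated wa) | exact: (lower_power_bound_dominated b0 wb)].
Qed.

Lemma same_order_density_power_bounds : same_order n w <->
  (exists2 b, 0 < b & lower_power_bound n b) /\ (exists a, upper_power_bound n a).
Proof.
split=> [so | [[b b0 nb] [a na]]]; last first.
  split; first exact: (density_upper_power_bound_dominated na).
  exact: (density_lower_power_bound_dominated b0 nb).
have [[b b0 wb] [a wa]] := same_order_power_bounds.1 so.
split; first by exists b => //; exact: (lower_power_bound_same_order so wb).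
by exists a; exact: (upper_power_bound_same_order so wa).
Qed.

End log_primitive.

Section weight_sequence.
Context {R : realType} {M : nat -> R} (wM : weight_sequence M).

Let M_gt0 p : 0 < M p. Proof. by case: wM. Qed.

Lemma quot_gt0 p : 0 < quot M p.
Proof. by rewrite divr_gt0. Qed.

Lemma mul_quot p : quot M p * M p = M p.+1.
Proof. by rewrite divfK ?gt_eqF. Qed.

Lemma quot_homo : {homo quot M : i j / (i <= j)%N >-> i <= j}.
Proof.
apply/nondecreasing_seqP => p; case: wM => _ _ logconvex _.
have := logconvex p.+1 isT.
by rewrite /quot ler_pdivrMr // mulrAC ler_pdivlMr // -expr2 mulrC.
Qed.

Lemma quot_unbounded t : exists j, t < quot M j.
Proof.
apply: contrapT => t_ge; have {}t_ge j : quot M j <= t.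
  by rewrite leNgt; apply/negP => tj; apply: t_ge; exists j.
have t0 : 0 < t := lt_le_trans (quot_gt0 0) (t_ge 0).
have M_le p : M p <= t ^+ p.
  elim: p => [|p IH]; first by case: wM => ->.
  rewrite -mul_quot exprSr mulrC.
  by apply: ler_pM; rewrite ?(ltW (M_gt0 p)) ?(ltW (quot_gt0 p)) ?t_ge.
case: wM => _ _ _ /cvgry_ge/(_ (t + 1))[N _ /(_ N.+1 (leqnSn N))] /= root_ge.
have root_le : M N.+1 `^ N.+1%:R^-1 <= t.
  have tE : (t ^+ N.+1) `^ N.+1%:R^-1 = t.
    by rewrite -powR_mulrn ?ltW // -powRrM mulfV ?pnatr_eq0 // powRr1 // ltW.
  rewrite -[leRHS]tE; apply: ge0_ler_powR; rewrite ?nnegrE ?invr_ge0 ?M_le //.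
  - exact: ltW.
  - by rewrite exprn_ge0 // ltW.
lra.
Qed.

Definition nu_index t : nat := ex_minn (quot_unbounded t).

Lemma quot_le_nu_index t j : (j < nu_index t)%N -> quot M j <= t.
Proof.
rewrite /nu_index; case: ex_minnP => N _ N_min jN.
by rewrite leNgt; apply/negP => /N_min; rewrite leqNgt jN.
Qed.

Lemma nu_index_le_quot t j : (nu_index t <= j)%N -> t < quot M j.
Proof.
rewrite /nu_index; case: ex_minnP => N tN _ Nj.
exact: lt_le_trans tN (quot_homo Nj).
Qed.

Lemma nuE t : nu (quot M) t = (nu_index t)%:R.
Proof.
rewrite /nu; have -> : [set j | quot M j <= t] = `I_(nu_index t).
  apply/seteqP; split => j /=; last exact: quot_le_nu_index.
  by rewrite ltnNge; apply: contraTN => /nu_index_le_quot; rewrite ltNge.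
by rewrite (card_fset_set (card_eqxx _)).
Qed.

Definition omega_term t p := t ^+ p / M p.

Lemma omega_term_gt0 t p : 0 < t -> 0 < omega_term t p.
Proof. by move=> t0; rewrite divr_gt0 // exprn_gt0. Qed.

Lemma omega_termS t p : omega_term t p.+1 = omega_term t p * (t / quot M p).
Proof.
rewrite /omega_term -mul_quot exprSr.
by field; rewrite !gt_eqF ?quot_gt0.
Qed.

Lemma omega_term_le_nu_index t p : 0 < t -> omega_term t p <= omega_term t (nu_index t).
Proof.
move=> t0; set N := nu_index t; have term_ge0 q := ltW (omega_term_gt0 q t0).
have [pN|Np] := leqP p N.
- suff up d : (p + d <= N)%N -> omega_term t p <= omega_term t (p + d).
    by rewrite -(subnKC pN); apply: up; rewrite subnKC.
  elim: d => [|d IH] pdN; first by rewrite addn0.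
  rewrite addnS in pdN *; apply: le_trans (IH (ltnW pdN)) _.
  rewrite omega_termS ler_peMr // ler_pdivlMr ?quot_gt0 // mul1r.
  exact: quot_le_nu_index.
- suff down d : omega_term t (N + d) <= omega_term t N.
    by rewrite -(subnKC (ltnW Np)); apply: down.
  elim: d => [|d IH]; first by rewrite addn0.
  rewrite addnS; apply: le_trans _ IH.
  rewrite omega_termS ler_piMr // ler_pdivrMr ?quot_gt0 // mul1r.
  by apply/ltW/nu_index_le_quot; rewrite leq_addr.
Qed.

Lemma omegaME t : 0 < t -> omegaM M t = ln (omega_term t (nu_index t)).
Proof.
move=> t0; rewrite /omegaM t0; apply/le_anti/andP; split.
  apply: ge_sup; first by exists (ln (omega_term t 0)), 0%N.
  move=> _ [p _ <-]; rewrite -/(omega_term t p) ler_ln ?posrE ?omega_term_gt0 //.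
  exact: omega_term_le_nu_index.
apply: ub_le_sup; last by exists (nu_index t).
exists (ln (omega_term t (nu_index t))) => _ [p _ <-].
rewrite -/(omega_term t p) ler_ln ?posrE ?omega_term_gt0 //.
exact: omega_term_le_nu_index.
Qed.

Lemma ln_omega_term_le t p : 0 < t -> ln (omega_term t p) <= omegaM M t.
Proof.
move=> t0; rewrite omegaME // ler_ln ?posrE ?omega_term_gt0 //.
exact: omega_term_le_nu_index.
Qed.

(* [nu (quot M) s] is a subgradient of [x |-> omegaM M (expR x)] at [ln s]. *)
Lemma omegaM_subgradient s l : 0 < s -> 0 < l ->
  omegaM M s + nu (quot M) s * ln l <= omegaM M (l * s).
Proof.
move=> s0 l0; set N := nu_index s.
have termE : omega_term (l * s) N = l ^+ N * omega_term s N.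
  by rewrite /omega_term exprMn mulrA.
apply: le_trans (ln_omega_term_le N (mulr_gt0 l0 s0)).
rewrite nuE omegaME // termE [ln (l ^+ _ * _)]lnM ?posrE ?exprn_gt0 ?omega_term_gt0 //.
by rewrite lnXn // mulr_natl addrC.
Qed.

Lemma weight_sequence_log_primitive : log_primitive (omegaM M) (nu (quot M)).
Proof.
split.
- move=> t t0; rewrite -ln1; apply: le_trans (ln_omega_term_le 0 t0).
  by case: wM => M0 _ _ _; rewrite /omega_term M0 divr1.
- by move=> t; rewrite nuE.
- move=> t l t0 l1; have := omegaM_subgradient t0 (lt_le_trans ltr01 l1); lra.
- move=> t l t0 l1; have l0 := lt_le_trans ltr01 l1.
  have linv0 : 0 < l^-1 by rewrite invr_gt0.
  have := omegaM_subgradient t0 linv0; rewrite [l^-1 * t]mulrC lnV ?posrE //; lra.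
- exists (quot M 0); split; first exact: num_real.
  move=> t m0t; have t0 := lt_trans (quot_gt0 0) m0t.
  split; last first.
    rewrite nuE ler1n lt0n; apply: contraTneq m0t => N0.
    by rewrite -leNgt; apply/ltW/nu_index_le_quot; rewrite N0.
  apply: lt_le_trans (ln_omega_term_le 1 t0).
  rewrite ln_gt0 // /omega_term expr1 -mul_quot; case: wM => -> _ _ _.
  by rewrite mulr1 ltr_pdivlMr ?quot_gt0 // mul1r.
Qed.

End weight_sequence.

Theorem corollary4p5 (R : realType) (M : nat -> R) :
  weight_sequence M ->
  let ratio := fun t : R => ((nu (quot M) t / omegaM M t)%R)%:E in
  let cond_i := (0 < liminf_pinfty ratio)%E /\
                (liminf_pinfty ratio <= limsup_pinfty ratio)%E /\
                (limsup_pinfty ratio < +oo)%E in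
  let cond_ii := (0 < beta_idx (nu (quot M)))%E /\
                 (alpha_idx (nu (quot M)) < +oo)%E in
  let cond_iii := (0 < beta_idx (omegaM M))%E /\
                  (alpha_idx (omegaM M) < +oo)%E in
  [/\ (cond_i <-> cond_ii), (cond_ii <-> cond_iii) &
      (cond_i -> beta_idx (omegaM M) = beta_idx (nu (quot M)) /\
                 alpha_idx (omegaM M) = alpha_idx (nu (quot M)))].
Proof.
move=> wM ratio cond_i cond_ii cond_iii.
have wn := weight_sequence_log_primitive wM.
have w_gt0 := log_primitive_near_gt0 wn; have n_gt0 := density_near_gt0 wn.
have i_so : cond_i <-> same_order (nu (quot M)) (omegaM M).
  rewrite same_order_ratio //; split=> [[inf_gt0 [_ sup_lty]] // | [inf_gt0 sup_lty]].
  by do 2?split => //; exact: limf_einf_le_esup.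
have ii_so : cond_ii <-> same_order (nu (quot M)) (omegaM M).
  by rewrite /cond_ii (same_order_density_power_bounds wn) beta_idx_gt0 // alpha_idx_lty.
have iii_so : cond_iii <-> same_order (nu (quot M)) (omegaM M).
  by rewrite /cond_iii (same_order_power_bounds wn) beta_idx_gt0 // alpha_idx_lty.
split; [by rewrite i_so ii_so | by rewrite ii_so iii_so | move=> /i_so so].
by split; apply: esym; [apply: beta_idx_same_order | apply: alpha_idx_same_order].
Qed.
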